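(* Let $\ell,D>0$, let $\mathcal A$ be a first-order $p$-SCLI and let $x^{(t)}$ denote its iterates when run with the operator $\nabla f$. Then there are constants $c_{\mathcal A},T_{\mathcal A}>0$ such that for every $T\ge T_{\mathcal A}$ there exist $f\in\mathcal F^{\mathrm{quad}}_{n,\ell,D}$, initial points $x^{(0)},\dots,x^{(-p+1)}$ of Euclidean norm at most $D$, and some $T'\in\{T,T+1,\dots,T+p-1\}$ such that $f(x^{(T')})-f(x^* )\ge\frac{c_{\mathcal A}\ell D^2}{T}$, where $x^*$ is the minimizer of $f$.
   Context: A first-order $p$-SCLI is specified by fixed real scalars $\alpha_0,\dots,\alpha_{p-1},\beta_0,\dots,\beta_{p-1}$: given $F:\mathbb R^n\to\mathbb R^n$ (here $F=\nabla f$) and initial points $x^{(0)},\dots,x^{(-p+1)}$, it generates $x^{(t)}=\sum_{j=0}^{p-1}\big(\alpha_jF(x^{(t-p+j)})+\beta_jx^{(t-p+j)}\big)$ for $t\ge1$. $\mathcal F^{\mathrm{quad}}_{n,\ell,D}$ is the class of functions $f(x)=\frac12x^\top Sx+b^\top x$ on $\mathbb R^n$ with $S$ symmetric positive definite, $\nabla f$ $\ell$-Lipschitz, and $x^*:=-S^{-1}b$ satisfying $\|x^*\|\le D$. *)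

From HB Require Import structures.
From mathcomp Require Import all_boot all_order all_algebra.
From mathcomp Require Import reals.
Set Implicit Arguments. Unset Strict Implicit. Unset Printing Implicit Defensive.
Import Order.TTheory GRing.Theory Num.Theory.
Local Open Scope ring_scope.

Section Defs.
Variables (R : realType) (n : nat).
Notation vec := 'cV[R]_n.

Definition vnorm (x : vec) : R := Num.sqrt ((x^T *m x) ord0 ord0).

Definition quadf (S : 'M[R]_n) (b : vec) (x : vec) : R :=
  2^-1 * (x^T *m S *m x) ord0 ord0 + (b^T *m x) ord0 ord0.

Definition quadgrad (S : 'M[R]_n) (b : vec) (x : vec) : vec := S *m x + b.

Definition quadmin (S : 'M[R]_n) (b : vec) : vec := - (invmx S *m b).

Definition symmetric_mx (S : 'M[R]_n) : Prop := S^T = S.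
Definition posdef_mx (S : 'M[R]_n) : Prop :=
  symmetric_mx S /\ forall x : vec, x != 0 -> 0 < (x^T *m S *m x) ord0 ord0.

Definition in_Fquad (l D : R) (S : 'M[R]_n) (b : vec) : Prop :=
  posdef_mx S /\
  (forall x y : vec, vnorm (quadgrad S b x - quadgrad S b y) <= l * vnorm (x - y)) /\
  vnorm (quadmin S b) <= D.

(* A window w : nat -> vec stores w j = x^(t-p+1+j) for j < p
   (entries j >= p are irrelevant).  One step computes
   x^(t+1) = sum_{j<p} (alpha_j F(x^(t+1-p+j)) + beta_j x^(t+1-p+j))
   and shifts the window. *)
Definition scli_step (p : nat) (alpha beta : 'I_p -> R) (F : vec -> vec)
    (w : nat -> vec) : nat -> vec :=
  fun j => if (j.+1 < p)%N then w j.+1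
           else \sum_(i < p) (alpha i *: F (w i) + beta i *: w i).

(* x^(t) for t >= 0, given init j = x^(j-p+1) for j < p (requires p >= 1) *)
Definition scli_iterate (p : nat) (alpha beta : 'I_p -> R) (F : vec -> vec)
    (init : nat -> vec) (t : nat) : vec :=
  iter t (scli_step alpha beta F) init p.-1.

End Defs.

(* Every hard instance is one-dimensional: f(v) = lam/2 |v - r e0|^2 with 0 < lam <= l,
   on which the iterates stay on the line R e0 and follow the scalar recurrence
   x(t+p) = sum_i (alpha_i lam (x(t+i) - r) + beta_i x(t+i)).
   If sum beta <> 1, the recurrence has a constant solution y <> r, and the gap never
   decreases.  If sum beta = 1, take r = 0: a root z of the characteristic polynomial
   chi = X^p - sum_i (beta_i + lam alpha_i) X^i gives the solution Re (u z^t), whose gap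
   at time T + p - 1 is of order lam D^2 min(1, |z|^(2(T+p-1))).  With lam ~ 1/T it
   remains to find a root with |z| >= 1 - K lam.  For sum alpha >= 0 there is a real root
   >= 1.  For sum alpha < 0, if all roots were in |z| <= 1 - K lam, the numbers
   w = 1/(1 - z) would lie in the disk k |w|^2 <= 2 Re w with k ~ 2 K lam, while sum w,
   sum w^2 and prod |w|^2 are fixed by chi(1) = - lam sum alpha, chi'(1) and chi''(1);
   for K large and lam small these constraints are incompatible. *)

From HB Require Import structures.
From mathcomp Require Import all_boot all_order all_algebra.
From mathcomp Require Import reals complex polyrcf ring lra zify.
Import Order.TTheory GRing.Theory Num.Theory.
Local Open Scope ring_scope.

Set Implicit Arguments. Unset Strict Implicit. Unset Printing Implicit Defensive.

Local Notation Re := complex.Re.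
Local Notation Im := complex.Im.

Section ComplexSquaredNorm.
Variable R : rcfType.
Local Notation C := R[i].
Local Open Scope complex_scope.

Definition sqnormc (z : C) : R := Re z ^+ 2 + Im z ^+ 2.

Lemma sqnormc_ge0 (z : C) : 0 <= sqnormc z.
Proof. by rewrite addr_ge0 ?sqr_ge0. Qed.

Lemma sqnormcM (x y : C) : sqnormc (x * y) = sqnormc x * sqnormc y.
Proof. by case: x => a b; case: y => c d; rewrite /sqnormc /=; ring. Qed.

Lemma sqnormcX (z : C) k : sqnormc (z ^+ k) = sqnormc z ^+ k.
Proof.
elim: k => [|k IH]; last by rewrite !exprS sqnormcM IH.
by rewrite /sqnormc /= expr0n /= addr0 !expr1n.
Qed.

Lemma sqnormc_real (x : R) : sqnormc x%:C = x ^+ 2.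
Proof. by rewrite /sqnormc /= expr0n /= addr0. Qed.

Lemma sqnormc_conj (z : C) : sqnormc z^* = sqnormc z.
Proof. by case: z => a b; rewrite /sqnormc /= sqrrN. Qed.

Lemma mulcJ_sqnormc (z : C) : z^* * z = (sqnormc z)%:C.
Proof. by case: z => a b; rewrite /sqnormc /=; congr Complex; ring. Qed.

Lemma sqnormc_prod (I : Type) (r : seq I) (F : I -> C) :
  sqnormc (\prod_(i <- r) F i) = \prod_(i <- r) sqnormc (F i).
Proof. by apply: (big_morph _ sqnormcM); rewrite sqnormc_real expr1n. Qed.

Lemma Re_sqr_le_sqnormc (z : C) : Re z ^+ 2 <= sqnormc z.
Proof. by rewrite lerDl sqr_ge0. Qed.

Lemma Re_realM (x : R) (z : C) : Re (x%:C * z) = x * Re z.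
Proof. by case: z => a b /=; ring. Qed.

Lemma Re_sqr (z : C) : Re (z ^+ 2) = Re z ^+ 2 - Im z ^+ 2.
Proof. by case: z => a b /=; ring. Qed.

Lemma inv_1subc_disk (rho : R) (z : C) : 0 <= rho < 1 -> sqnormc z <= rho ^+ 2 ->
  0 < Re (1 - z)^-1 /\ (1 - rho ^+ 2) * sqnormc (1 - z)^-1 <= 2 * Re (1 - z)^-1.
Proof.
case: z => a b /andP[rho0 rho1]; rewrite /sqnormc /= !sub0r sqrrN mulNr opprK => hz.
have ha : a < 1 by nra.
set N := (1 - a) ^+ 2 + b ^+ 2.
have hN : 0 < N by rewrite /N; nra.
have -> : ((1 - a) / N) ^+ 2 + (b / N) ^+ 2 = N^-1.
  by move: hN; rewrite /N => /lt0r_neq0 hN; field.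
split; first by apply: divr_gt0; lra.
rewrite mulrA ler_pM2r ?invr_gt0 //; nra.
Qed.

End ComplexSquaredNorm.

Section LogarithmicDerivative.
Variable F : fieldType.
Implicit Types (s : seq F) (x : F).

Lemma horner_deriv_prod_XsubC s x : x \notin s ->
  (\prod_(z <- s) ('X - z%:P))^`().[x] =
    \prod_(z <- s) (x - z) * \sum_(z <- s) (x - z)^-1.
Proof.
elim: s => [|a s IH]; first by rewrite !big_nil -polyC1 derivC horner0 mulr0.
rewrite inE negb_or => /andP[xa xs].
have xa0 : x - a != 0 by rewrite subr_eq0.
rewrite !big_cons; set Q := \prod_(z <- s) ('X - z%:P) in IH *.
rewrite derivM derivXsubC mul1r !(hornerXsubC, hornerD, hornerM) IH // horner_prod.
under eq_bigr do rewrite hornerXsubC.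
by field.
Qed.

Lemma horner_deriv2_prod_XsubC s x : x \notin s ->
  (\prod_(z <- s) ('X - z%:P))^`(2).[x] =
    \prod_(z <- s) (x - z) *
      ((\sum_(z <- s) (x - z)^-1) ^+ 2 - \sum_(z <- s) ((x - z)^-1) ^+ 2).
Proof.
elim: s => [|a s IH]; first by rewrite !big_nil -polyC1 derivnC horner0 expr0n subrr mulr0.
rewrite inE negb_or => /andP[xa xs].
have xa0 : x - a != 0 by rewrite subr_eq0.
have Q1 := horner_deriv_prod_XsubC xs.
rewrite !big_cons; set Q := \prod_(z <- s) ('X - z%:P) in IH Q1 *.
rewrite /= derivM derivXsubC mul1r derivD derivM derivXsubC mul1r.
rewrite !(hornerXsubC, hornerD, hornerM) -[Q^`()^`()]/(Q^`(2)) IH // Q1.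
by field.
Qed.

End LogarithmicDerivative.

Lemma sum_sqr_le_sqr_sum (R : realDomainType) (I : eqType) (r : seq I) (f : I -> R) :
  (forall i, i \in r -> 0 <= f i) -> \sum_(i <- r) f i ^+ 2 <= (\sum_(i <- r) f i) ^+ 2.
Proof.
elim: r => [|a r IH] hf; first by rewrite !big_nil expr0n.
rewrite !big_cons.
have fa : 0 <= f a by apply: hf; rewrite mem_head.
have hr : forall i, i \in r -> 0 <= f i by move=> i ir; apply: hf; rewrite inE ir orbT.
have sr : 0 <= \sum_(i <- r) f i by rewrite big_seq; apply: sumr_ge0 => i /hr.
have := IH hr; nra.
Qed.

Lemma ler_sum_seq_mem (R : realDomainType) (I : eqType) (r : seq I) (f : I -> R) i :
  i \in r -> (forall j, j \in r -> 0 <= f j) -> f i <= \sum_(j <- r) f j.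
Proof.
elim: r => [|a r IH] //; rewrite inE big_cons => /orP[/eqP-> | ir] hf.
  by rewrite lerDl big_seq sumr_ge0 // => j jr; apply: hf; rewrite inE jr orbT.
apply: le_trans (IH ir _) _; first by move=> j jr; apply: hf; rewrite inE jr orbT.
by rewrite lerDr hf ?mem_head.
Qed.

Section DiskMoments.
Variables (R : rcfType) (k : R) (s : seq R[i]).
Hypothesis k_gt0 : 0 < k.
Hypothesis Re_gt0 : forall w, w \in s -> 0 < Re w.
Hypothesis in_disk : forall w, w \in s -> k * sqnormc w <= 2 * Re w.

Lemma sum_Re_gt0 : s != [::] -> 0 < \sum_(w <- s) Re w.
Proof.
case: s Re_gt0 => [//|a r] hpos _; rewrite big_cons.
have ha := hpos a (mem_head _ _).
have : 0 <= \sum_(w <- r) Re w.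
  by rewrite big_seq sumr_ge0 // => w wr; apply/ltW/hpos; rewrite inE wr orbT.
lra.
Qed.

Lemma disk_sum_Re_le : k * \sum_(w <- s) Re w <= 2 * (size s)%:R.
Proof.
rewrite mulr_sumr (big_nth 0) big_mkord.
have -> : 2 * (size s)%:R = \sum_(i < size s) (2 : R) by rewrite sumr_const card_ord mulr_natr.
apply: ler_sum => i _; have si : s`_i \in s by rewrite mem_nth.
have := in_disk si; have := Re_gt0 si; rewrite /sqnormc.
set a := Re _; set b := Im _ => ha hw.
have : 0 <= k * b ^+ 2 by rewrite mulr_ge0 ?sqr_ge0 ?ltW.
nra.
Qed.

Lemma disk_sum_Re_sqr_ge : - 2 * \sum_(w <- s) Re w <= k * \sum_(w <- s) Re (w ^+ 2).
Proof.
rewrite !mulr_sumr big_seq [X in _ <= X]big_seq; apply: ler_sum => w ws.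
have := in_disk ws; rewrite Re_sqr /sqnormc => hw.
have : 0 <= k * Re w ^+ 2 by rewrite mulr_ge0 ?sqr_ge0 ?ltW.
nra.
Qed.

Lemma sum_Re_sqr_le : \sum_(w <- s) Re (w ^+ 2) <= (\sum_(w <- s) Re w) ^+ 2.
Proof.
apply: le_trans _ (sum_sqr_le_sqr_sum (f := fun w => Re w) (fun w ws => ltW (Re_gt0 ws))).
by apply: ler_sum => w _; rewrite Re_sqr lerBlDr lerDl sqr_ge0.
Qed.

Lemma prod_sqnormc_le :
  \prod_(w <- s) sqnormc w <= (2 * (\sum_(w <- s) Re w) ^+ 2 - \sum_(w <- s) Re (w ^+ 2)) ^+ size s.
Proof.
set M := _ - _.
have le_M w : w \in s -> sqnormc w <= M.
  move=> ws; apply: le_trans (ler_sum_seq_mem ws (fun w _ => sqnormc_ge0 w)) _.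
  have -> : \sum_(w <- s) sqnormc w = 2 * \sum_(w <- s) Re w ^+ 2 - \sum_(w <- s) Re (w ^+ 2).
    rewrite mulr_sumr -sumrB; apply: eq_bigr => v _; rewrite Re_sqr /sqnormc; ring.
  rewrite lerD2r ler_pM2l //.
  exact: (sum_sqr_le_sqr_sum (f := fun w => Re w) (fun w ws => ltW (Re_gt0 ws))).
rewrite [X in _ <= X](_ : _ = \prod_(w <- s) M); last first.
  by rewrite (big_nth 0) big_mkord prodr_const card_ord.
by rewrite big_seq [X in _ <= X]big_seq; apply: ler_prod => w ws; rewrite sqnormc_ge0 le_M.
Qed.

End DiskMoments.

(* The constraints on sg = sum Re 1/(1 - z) and ta = sum Re 1/(1 - z)^2, over the roots
   z of a real monic polynomial chi of degree p lying in the disk |z| <= rho < 1, where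
   k = 1 - rho^2 and q0, q1, q2 are chi(1), chi'(1), chi''(1). *)
Definition disk_moment_bounds (R : realFieldType) (k : R) (p : nat) (q0 q1 q2 : R) : Prop :=
  let sg := q1 / q0 in let ta := sg ^+ 2 - q2 / q0 in
  [/\ 0 < sg, k * sg <= 2 * p%:R, - 2 * sg <= k * ta, ta <= sg ^+ 2
    & 1 <= q0 ^+ 2 * (2 * sg ^+ 2 - ta) ^+ p].

Section MonicDiskMoments.
Variable R : rcfType.
Local Notation C := R[i].
Local Open Scope complex_scope.

Lemma horner1_map_real (q : {poly R}) : (map_poly (real_complex R) q).[1] = q.[1]%:C.
Proof. by rewrite -(rmorph1 (real_complex R)) horner_map. Qed.

Lemma map_monic_prod_roots (chi : {poly R}) : chi \is monic ->
  exists r : seq C, map_poly (real_complex R) chi = \prod_(z <- r) ('X - z%:P).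
Proof.
move=> chi_monic; have [r chiE] := closed_field_poly_normal (map_poly (real_complex R) chi).
by exists r; rewrite chiE lead_coef_map (monicP chi_monic) rmorph1 scale1r.
Qed.

Lemma monic_root_outside_or_disk (chi : {poly R}) (rho : R) : chi \is monic ->
  (exists z, root (map_poly (real_complex R) chi) z /\ rho ^+ 2 < sqnormc z) \/
  (forall z, root (map_poly (real_complex R) chi) z -> sqnormc z <= rho ^+ 2).
Proof.
move=> /map_monic_prod_roots[r chiE].
have rootE z : root (map_poly (real_complex R) chi) z = (z \in r).
  by rewrite chiE root_prod_XsubC.
have [/hasP[z zr z_out] | all_in] := boolP (has (fun z => rho ^+ 2 < sqnormc z) r).
  by left; exists z; rewrite rootE.
right=> z; rewrite rootE leNgt => zr.
by apply: contra all_in => z_out; apply/hasP; exists z.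
Qed.

Lemma prod_XsubC_power_sums (chi : {poly R}) (r : seq C) :
  map_poly (real_complex R) chi = \prod_(z <- r) ('X - z%:P) -> chi.[1] != 0 ->
  [/\ \prod_(z <- r) (1 - z) = chi.[1]%:C,
      \sum_(z <- r) (1 - z)^-1 = (chi^`().[1] / chi.[1])%:C &
      \sum_(z <- r) ((1 - z)^-1) ^+ 2 =
        ((chi^`().[1] / chi.[1]) ^+ 2 - chi^`(2).[1] / chi.[1])%:C].
Proof.
move=> chiE q0_neq0.
have q0C : chi.[1]%:C != 0 by rewrite (inj_eq (@complexI R)).
have one_notin_r : 1 \notin r.
  by rewrite -root_prod_XsubC -chiE /root horner1_map_real.
have e0 : \prod_(z <- r) (1 - z) = chi.[1]%:C.
  by rewrite -horner1_map_real chiE horner_prod; apply: eq_bigr => z _; rewrite !hornerE.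
have e1 := horner_deriv_prod_XsubC one_notin_r.
have e2 := horner_deriv2_prod_XsubC one_notin_r.
rewrite -chiE ?deriv_map ?derivn_map !horner1_map_real e0 in e1 e2.
have sum_w : \sum_(z <- r) (1 - z)^-1 = (chi^`().[1] / chi.[1])%:C.
  by rewrite fmorph_div /= e1 mulrC mulKf.
split => //; rewrite rmorphB fmorph_div /= rmorphXn /= -sum_w e2.
by field.
Qed.

Lemma monic_disk_moments (chi : {poly R}) (rho : R) :
  chi \is monic -> (1 < size chi)%N -> 0 <= rho < 1 ->
  (forall z, root (map_poly (real_complex R) chi) z -> sqnormc z <= rho ^+ 2) ->
  disk_moment_bounds (1 - rho ^+ 2) (size chi).-1 chi.[1] chi^`().[1] chi^`(2).[1].
Proof.
move=> chi_monic chi_size /andP[rho0 rho1] roots_disk.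
have [r chiE] := map_monic_prod_roots chi_monic.
have r_disk z : z \in r -> sqnormc z <= rho ^+ 2.
  by move=> zr; apply: roots_disk; rewrite chiE root_prod_XsubC.
have q0_neq0 : chi.[1] != 0.
  apply/eqP => q0_eq0; have := roots_disk 1.
  rewrite /root horner1_map_real q0_eq0 rmorph0 eqxx => /(_ isT).
  by rewrite -(rmorph1 (real_complex R)) sqnormc_real expr1n; nra.
have [e0 sum_w sum_w2] := prod_XsubC_power_sums chiE q0_neq0.
set s := [seq (1 - z)^-1 | z <- r].
have k_gt0 : 0 < 1 - rho ^+ 2 by nra.
have w_disk w : w \in s -> 0 < Re w /\ (1 - rho ^+ 2) * sqnormc w <= 2 * Re w.
  by case/mapP => z zr ->; apply: inv_1subc_disk; rewrite ?rho0 ?r_disk.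
have Re_gt0 w (ws : w \in s) := proj1 (w_disk w ws).
have in_disk w (ws : w \in s) := proj2 (w_disk w ws).
have s_size : size s = (size chi).-1.
  by rewrite size_map -(size_map_poly (real_complex R)) chiE size_prod_XsubC.
move/(congr1 (@complex.Re R)): sum_w.
rewrite raddf_sum /= -(big_map _ xpredT (fun w => Re w)) => sg_E.
move/(congr1 (@complex.Re R)): sum_w2.
rewrite raddf_sum /= -(big_map _ xpredT (fun w => Re (w ^+ 2))) => ta_E.
rewrite /disk_moment_bounds /= -[chi^`()^`()]/(chi^`(2)) -ta_E -sg_E -s_size; split.
- by apply: sum_Re_gt0 => //; rewrite -size_eq0 s_size -lt0n -ltnS prednK // ltnW.
- exact: disk_sum_Re_le.
- exact: disk_sum_Re_sqr_ge.
- exact: sum_Re_sqr_le.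
have prod_w : \prod_(w <- s) sqnormc w = (chi.[1] ^+ 2)^-1.
  by rewrite -sqnormc_prod big_map prodfV e0 -fmorphV sqnormc_real exprVn.
have := prod_sqnormc_le Re_gt0; rewrite prod_w.
have q0_sqr_gt0 : 0 < chi.[1] ^+ 2 by rewrite lt0r sqr_ge0 sqrf_eq0 q0_neq0.
by rewrite -[X in X <= _ -> _]mul1r ler_pdivrMr // mulrC.
Qed.

End MonicDiskMoments.

Section NearZero.
Variable R : realFieldType.
Implicit Types (P Q : R -> Prop) (a d e : R).

Definition near0 P : Prop := exists2 e, 0 < e & forall x, 0 < x -> x <= e -> P x.

Lemma near0W P Q : near0 P -> (forall x, 0 < x -> P x -> Q x) -> near0 Q.
Proof. by move=> [e e_gt0 hP] PQ; exists e => // x x_gt0 xe; apply/PQ/hP. Qed.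

Lemma near0_and P Q : near0 P -> near0 Q -> near0 (fun x => P x /\ Q x).
Proof.
move=> [e e_gt0 hP] [e' e'_gt0 hQ]; exists (Num.min e e'); first by rewrite lt_min e_gt0.
by move=> x x_gt0; rewrite le_min => /andP[xe xe']; split; [apply: hP | apply: hQ].
Qed.

Lemma near0_le e : 0 < e -> near0 (fun x => x <= e).
Proof. by move=> e_gt0; exists e. Qed.

Lemma near0_affine_lt0 d a : d < 0 -> near0 (fun x => d - x * a < 0).
Proof.
move=> d_lt0; have e_gt0 : 0 < - d / (`|a| + 1) by rewrite divr_gt0 ?oppr_gt0 ?ltr_wpDl.
apply: (near0W (near0_le e_gt0)) => x x_gt0; rewrite ler_pdivlMr ?ltr_wpDl // => hx.
have : - a <= `|a| by rewrite -normrN ler_norm.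
nra.
Qed.

Lemma near0_affine_ge_half d a : 0 < d -> near0 (fun x => d / 2 <= d - x * a).
Proof.
move=> d_gt0; have e_gt0 : 0 < d / (2 * (`|a| + 1)) by rewrite divr_gt0 ?mulr_gt0 ?ltr_wpDl.
apply: (near0W (near0_le e_gt0)) => x x_gt0; rewrite ler_pdivlMr ?mulr_gt0 ?ltr_wpDl // => hx.
have : a <= `|a| by rewrite ler_norm.
nra.
Qed.

End NearZero.

Lemma sub1_sqr_bounds (R : realDomainType) (x : R) :
  0 <= x <= 1 -> x <= 1 - (1 - x) ^+ 2 <= 2 * x.
Proof. by case/andP => x0 x1; apply/andP; split; nra. Qed.

Section PerturbedDiskMoments.
Variables (R : realFieldType) (p : nat) (a d1 a1 d2 a2 : R).
Hypotheses (p_gt0 : (0 < p)%N) (a_gt0 : 0 < a).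

(* The disk constraints for the radius 1 - K lam and the polynomial chi0 - lam * al,
   where chi0(1) = 0, al(1) = - a, and d1, d2 (resp. a1, a2) are the first and second
   derivatives of chi0 (resp. al) at 1. *)
Let moments (K lam : R) :=
  disk_moment_bounds (1 - (1 - K * lam) ^+ 2) p (lam * a) (d1 - lam * a1) (d2 - lam * a2).

Let near0_K_le1 (K : R) : 0 < K -> near0 (fun lam => 0 <= K * lam <= 1).
Proof.
move=> K_gt0; have Kinv_gt0 : 0 < K^-1 by rewrite invr_gt0.
apply: (near0W (near0_le Kinv_gt0)) => lam lam_gt0 lam_le.
rewrite mulr_ge0 ?(ltW K_gt0) ?(ltW lam_gt0) //=.
by rewrite -(divff (lt0r_neq0 K_gt0)) ler_pM2l.
Qed.

Lemma not_moments_deriv_le0 (K : R) :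
  near0 (fun lam => d1 - lam * a1 <= 0) -> near0 (fun lam => ~ moments K lam).
Proof.
move=> r1_near; apply: (near0W r1_near) => lam lam_gt0 r1_le0 [+ _ _ _ _].
by rewrite ltr_pdivlMr ?mulr_gt0 // mul0r ltNge r1_le0.
Qed.

Lemma not_moments_d1_gt0 : 0 < d1 -> exists2 K, 0 < K & near0 (fun lam => ~ moments K lam).
Proof.
move=> d1_gt0; set K := 8 * p%:R * a / d1.
have K_gt0 : 0 < K by rewrite divr_gt0 ?mulr_gt0 ?ltr0n.
exists K => //; apply: (near0W (near0_and (near0_affine_ge_half a1 d1_gt0) (near0_K_le1 K_gt0))).
move=> lam lam_gt0 [r1_ge /sub1_sqr_bounds/andP[k_ge _]] [_ + _ _ _].
set k := 1 - _; set sg := _ / _.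
have q0_gt0 : 0 < lam * a by rewrite mulr_gt0.
have sg_ge : d1 / 2 / (lam * a) <= sg by rewrite ler_pM2r ?invr_gt0.
have sg_ge0 : 0 <= d1 / 2 / (lam * a) by rewrite ltW ?divr_gt0.
have : K * lam * (d1 / 2 / (lam * a)) <= k * sg.
  by apply: ler_pM => //; rewrite mulr_ge0 ?ltW.
have -> : K * lam * (d1 / 2 / (lam * a)) = 4 * p%:R.
  by rewrite /K; field; rewrite !lt0r_neq0.
have : (0 : R) < p%:R by rewrite ltr0n.
lra.
Qed.

Lemma not_moments_d2_lt0 (K : R) : d2 < 0 -> near0 (fun lam => ~ moments K lam).
Proof.
move=> d2_lt0; apply: (near0W (near0_affine_lt0 a2 d2_lt0)) => lam lam_gt0 r2_lt0 [_ _ _ + _].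
have : (d2 - lam * a2) / (lam * a) < 0 by rewrite ltr_pdivrMr ?mulr_gt0 // mul0r.
lra.
Qed.

Lemma not_moments_d2_gt0 : d1 = 0 -> a1 < 0 -> 0 < d2 ->
  exists2 K, 0 < K & near0 (fun lam => ~ moments K lam).
Proof.
move=> d1_eq0 a1_lt0 d2_gt0; set s0 := - a1 / a.
have s0_gt0 : 0 < s0 by rewrite divr_gt0 ?oppr_gt0.
set K := 8 * s0 * a / d2.
have K_gt0 : 0 < K by rewrite divr_gt0 // mulr_gt0 // mulr_gt0 // ltr0n.
have e_gt0 : 0 < (2 * K * s0)^-1 by rewrite invr_gt0 mulr_gt0 // mulr_gt0.
exists K => //; apply: (near0W (near0_and (near0_affine_ge_half a2 d2_gt0)
  (near0_and (near0_K_le1 K_gt0) (near0_le e_gt0)))).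
move=> lam lam_gt0 [r2_ge [Klam lam_le]] [_ _ + _ _].
have /andP[k_ge k_le] := sub1_sqr_bounds Klam; case/andP: Klam => Klam_ge0 _.
have q0_gt0 : 0 < lam * a by rewrite mulr_gt0.
have -> : (d1 - lam * a1) / (lam * a) = s0 by rewrite d1_eq0 /s0; field; rewrite !lt0r_neq0.
set k := 1 - _; set u := _ / (lam * a).
have u_ge : d2 / 2 / (lam * a) <= u by rewrite ler_pM2r ?invr_gt0.
have u_ge0 : 0 <= d2 / 2 / (lam * a) by rewrite ltW ?divr_gt0.
have ku : 4 * s0 <= k * u.
  have -> : 4 * s0 = K * lam * (d2 / 2 / (lam * a)) by rewrite /K /s0; field; rewrite !lt0r_neq0.
  exact: ler_pM.
have ks0 : k * s0 ^+ 2 <= 2 * (K * lam) * s0 ^+ 2 by rewrite ler_wpM2r ?sqr_ge0.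
have Klams0 : K * lam * s0 <= 1 / 2.
  have x_gt0 : 0 < 2 * K * s0 by rewrite mulr_gt0 // mulr_gt0.
  have := mulfV (lt0r_neq0 x_gt0); move: lam_le x_gt0.
  set y := (2 * K * s0)^-1; nra.
rewrite mulrBr; nra.
Qed.

Lemma not_moments_d12_eq0 (K : R) : d1 = 0 -> d2 = 0 -> near0 (fun lam => ~ moments K lam).
Proof.
move=> d1_eq0 d2_eq0; set M := (- a1 / a) ^+ 2 - a2 / a.
set Y := `|M| ^+ p; have Y_ge0 : 0 <= Y by rewrite exprn_ge0.
have c_gt0 : 0 < a * (Y + 1) by rewrite mulr_gt0 ?ltr_wpDl.
have e_gt0 : 0 < (a * (Y + 1))^-1 by rewrite invr_gt0.
apply: (near0W (near0_le e_gt0)) => lam lam_gt0 lam_le [_ _ _ _].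
have -> : let sg := (d1 - lam * a1) / (lam * a) in
    2 * sg ^+ 2 - (sg ^+ 2 - (d2 - lam * a2) / (lam * a)) = M.
  by rewrite d1_eq0 d2_eq0 /M /=; field; rewrite !lt0r_neq0.
have MpY : M ^+ p <= Y by rewrite /Y -normrX ler_norm.
have := ler_wpM2r (ltW c_gt0) lam_le; rewrite mulVf ?lt0r_neq0 // mulrA.
have : 0 < lam * a by rewrite mulr_gt0.
set X := lam * a => X_gt0 XY.
have : X ^+ 2 * M ^+ p <= X ^+ 2 * Y by rewrite ler_wpM2l ?sqr_ge0.
nra.
Qed.

Lemma not_perturbed_disk_moments : exists2 K, 0 < K & near0 (fun lam => ~ moments K lam).
Proof.
have [d1_lt0 | d1_gt0 | d1_eq0] := ltgtP d1 0.
- exists 1 => //; apply: not_moments_deriv_le0.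
  by apply: (near0W (near0_affine_lt0 a1 d1_lt0)) => lam _ /ltW.
- exact: not_moments_d1_gt0.
have [a1_lt0 | a1_ge0] := ltP a1 0; last first.
  exists 1 => //; apply: not_moments_deriv_le0; exists 1 => // lam lam_gt0 _.
  by rewrite d1_eq0 sub0r oppr_le0 mulr_ge0 // ltW.
have [d2_lt0 | d2_gt0 | d2_eq0] := ltgtP d2 0.
- by exists 1 => //; apply: not_moments_d2_lt0.
- exact: not_moments_d2_gt0.
- by exists 1 => //; apply: not_moments_d12_eq0.
Qed.

End PerturbedDiskMoments.

Section CharacteristicPolynomial.
Variables (R : fieldType) (p : nat) (alpha beta : 'I_p -> R).

Definition scli_charpoly (lam : R) : {poly R} :=
  'X^p - \sum_(i < p) (beta i + lam * alpha i) *: 'X^i.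

Let size_sum_lt (c : 'I_p -> R) : (size (\sum_(i < p) c i *: 'X^i)%R < p.+1)%N.
Proof.
rewrite ltnS; apply/leq_sizeP => j pj; rewrite coef_sum big1 // => i _.
by rewrite coefZ coefXn gtn_eqF ?mulr0 // (leq_trans (ltn_ord i)).
Qed.

Let size_lower_lt lam :
  (size (- \sum_(i < p) (beta i + lam * alpha i) *: 'X^i) < size ('X^p : {poly R}))%N.
Proof. by rewrite size_polyN size_polyXn size_sum_lt. Qed.

Lemma scli_charpoly_monic lam : scli_charpoly lam \is monic.
Proof. by rewrite monicE lead_coefDl ?lead_coefXn. Qed.

Lemma size_scli_charpoly lam : size (scli_charpoly lam) = p.+1.
Proof. by rewrite size_polyDl //; apply: size_polyXn. Qed.

Lemma horner_scli_charpoly lam x :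
  (scli_charpoly lam).[x] = x ^+ p - \sum_(i < p) (beta i + lam * alpha i) * x ^+ i.
Proof.
rewrite hornerD hornerN hornerXn horner_sum; congr (_ - _).
by apply: eq_bigr => i _; rewrite hornerZ hornerXn.
Qed.

Lemma scli_charpolyE lam :
  scli_charpoly lam = scli_charpoly 0 - lam *: \sum_(i < p) alpha i *: 'X^i.
Proof.
rewrite /scli_charpoly -addrA -opprD scaler_sumr -big_split /=; congr (_ - _).
by apply: eq_bigr => i _; rewrite mul0r addr0 scalerA -scalerDl.
Qed.

End CharacteristicPolynomial.

Lemma root_scli_charpoly (R : rcfType) p (alpha beta : 'I_p -> R) lam (z : R[i]) :
  root (map_poly (real_complex R) (scli_charpoly alpha beta lam)) z ->
  z ^+ p = \sum_(i < p) ((beta i + lam * alpha i)%:C)%C * z ^+ i.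
Proof.
rewrite /root /scli_charpoly rmorphB /= map_polyXn rmorph_sum /= hornerD hornerN hornerXn.
rewrite horner_sum subr_eq0 => /eqP ->; apply: eq_bigr => i _.
by rewrite map_polyZ /= map_polyXn hornerZ hornerXn.
Qed.

Section RootNearUnitCircle.
Variables (R : rcfType) (p : nat) (alpha beta : 'I_p -> R).
Hypotheses (p_gt0 : (0 < p)%N) (sum_beta : \sum_(i < p) beta i = 1).
Local Notation chi := (scli_charpoly alpha beta).

Lemma horner1_scli_charpoly lam : (chi lam).[1] = lam * - \sum_(i < p) alpha i.
Proof.
rewrite horner_scli_charpoly expr1n.
under eq_bigr do rewrite expr1n mulr1.
by rewrite big_split /= sum_beta -mulr_sumr opprD addrA subrr sub0r mulrN.
Qed.

Lemma scli_charpoly_root_ge1 lam : 0 < lam -> 0 <= \sum_(i < p) alpha i ->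
  exists2 x, 1 <= x & root (chi lam) x.
Proof.
move=> lam_gt0 A_ge0.
have lc_gt0 : 0 < lead_coef (chi lam) by rewrite (monicP (scli_charpoly_monic _ _ _)).
have [N chi_ge] := poly_pinfty_gt_lc lc_gt0.
have le1M : 1 <= Num.max 1 N by rewrite le_max lexx.
have sign_change : (chi lam).[1] <= 0 <= (chi lam).[Num.max 1 N].
  rewrite horner1_scli_charpoly mulrN oppr_le0 (mulr_ge0 (ltW lam_gt0) A_ge0) /=.
  by apply: (le_trans (ltW lc_gt0) (chi_ge _ _)); rewrite le_max lexx orbT.
have [x /andP[x_ge1 _] rootx] := poly_ivt le1M sign_change.
by exists x.
Qed.

Lemma scli_charpoly_disk_moments lam rho : 0 <= rho < 1 ->
  (forall z, root (map_poly (real_complex R) (chi lam)) z -> sqnormc z <= rho ^+ 2) ->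
  let al := \sum_(i < p) alpha i *: 'X^i in
  disk_moment_bounds (1 - rho ^+ 2) p (lam * - \sum_(i < p) alpha i)
    ((chi 0)^`().[1] - lam * al^`().[1]) ((chi 0)^`(2).[1] - lam * al^`(2).[1]).
Proof.
move=> rho_bounds roots_disk al.
have size_chi : (1 < size (chi lam))%N by rewrite size_scli_charpoly ltnS.
have := monic_disk_moments (scli_charpoly_monic alpha beta lam) size_chi rho_bounds roots_disk.
rewrite size_scli_charpoly horner1_scli_charpoly scli_charpolyE.
by rewrite derivB derivZ derivnB derivnZ !(hornerD, hornerN, hornerZ).
Qed.

Lemma scli_charpoly_root_near_unit_circle : exists2 K, 0 < K &
  near0 (fun lam => exists z : R[i],
    root (map_poly (real_complex R) (chi lam)) z /\ (1 - K * lam) ^+ 2 < sqnormc z).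
Proof.
have [A_ge0 | A_lt0] := leP 0 (\sum_(i < p) alpha i).
  exists 1 => //; exists 1 => // lam lam_gt0 lam_le1.
  have [x x_ge1 rootx] := scli_charpoly_root_ge1 lam_gt0 A_ge0.
  exists x%:C%C; split; first exact: rmorph_root.
  by rewrite sqnormc_real mul1r; nra.
set al : {poly R} := \sum_(i < p) alpha i *: 'X^i.
have a_gt0 : 0 < - \sum_(i < p) alpha i by rewrite oppr_gt0.
have [K K_gt0 no_moments] := not_perturbed_disk_moments (chi 0)^`().[1] al^`().[1]
  (chi 0)^`(2).[1] al^`(2).[1] p_gt0 a_gt0.
have e_gt0 : 0 < (2 * K)^-1 by rewrite invr_gt0 mulr_gt0.
exists K => //; apply: (near0W (near0_and no_moments (near0_le e_gt0))).
move=> lam lam_gt0 [no_mom lam_le].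
have rho_bounds : 0 <= 1 - K * lam < 1.
  have := mulfV (lt0r_neq0 (mulr_gt0 (ltr0Sn R 1) K_gt0)).
  by move: lam_le; set y := (2 * K)^-1 => lam_le yK; apply/andP; split; nra.
have [// | roots_disk] :=
  monic_root_outside_or_disk (1 - K * lam) (scli_charpoly_monic alpha beta lam).
by case: no_mom; apply: scli_charpoly_disk_moments roots_disk.
Qed.

End RootNearUnitCircle.

Section EuclideanNorm.
Variables (R : realType) (n : nat).
Local Notation vec := 'cV[R]_n.

Lemma dot_ge0 (x : vec) : 0 <= (x^T *m x) 0 0.
Proof. by rewrite mxE sumr_ge0 // => i _; rewrite mxE -expr2 sqr_ge0. Qed.

Lemma dot_gt0 (x : vec) : x != 0 -> 0 < (x^T *m x) 0 0.
Proof.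
move=> x_neq0; rewrite lt0r dot_ge0 andbT; apply: contraNneq x_neq0.
rewrite mxE => /eqP; rewrite psumr_eq0 => [/allP x_eq0|i _]; last by rewrite mxE -expr2 sqr_ge0.
apply/eqP/matrixP => i j; rewrite (ord1 j) !mxE.
by have := x_eq0 i (mem_index_enum _); rewrite mxE -expr2 sqrf_eq0 => /eqP.
Qed.

Lemma dotZ (a : R) (x : vec) : ((a *: x)^T *m (a *: x)) 0 0 = a ^+ 2 * (x^T *m x) 0 0.
Proof. by rewrite !mxE mulr_sumr; apply: eq_bigr => i _; rewrite !mxE; ring. Qed.

Lemma vnormZ (a : R) (x : vec) : vnorm (a *: x) = `|a| * vnorm x.
Proof. by rewrite /vnorm dotZ sqrtrM ?sqr_ge0 // sqrtr_sqr. Qed.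

End EuclideanNorm.

Section LineQuadratics.
Variables (R : realType) (n : nat).
Local Notation vec := 'cV[R]_n.+1.
Implicit Types (lam r x : R).

Definition e0 : vec := delta_mx 0 0.

(* f(v) = lam / 2 * |v - r e0|^2, up to an additive constant. *)
Notation line_b lam r := (- ((lam * r) *: e0)).

Lemma dot_e0 (x y : R) : ((x *: e0)^T *m (y *: e0)) 0 0 = x * y.
Proof.
rewrite linearZ /= mxE linearZ /= -scalemxAl mxE trmx_delta mul_delta_mx mxE /=.
by rewrite mulr1 mulrC.
Qed.

Lemma vnorm_e0 x : vnorm (x *: e0) = `|x|.
Proof. by rewrite /vnorm dot_e0 -expr2 sqrtr_sqr. Qed.

Lemma quadgrad_e0 lam r x : quadgrad lam%:M (line_b lam r) (x *: e0) = (lam * (x - r)) *: e0.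
Proof. by rewrite /quadgrad mul_scalar_mx scalerA -scaleNr -scalerDl mulrBr. Qed.

Lemma quadmin_e0 lam r : lam != 0 -> quadmin lam%:M (line_b lam r) = r *: e0.
Proof.
move=> lam_neq0; rewrite /quadmin invmx_scalar mul_scalar_mx scalerN opprK scalerA.
by rewrite mulrA mulVf // mul1r.
Qed.

Lemma quadf_e0 lam r x :
  quadf lam%:M (line_b lam r) (x *: e0) = 2^-1 * lam * x ^+ 2 - lam * r * x.
Proof.
rewrite /quadf -mulmxA mul_scalar_mx -scalemxAr mxE dot_e0 -scaleNr dot_e0.
by rewrite mulNr expr2 mulrA.
Qed.

Lemma quadf_gap_e0 lam r x : lam != 0 ->
  quadf lam%:M (line_b lam r) (x *: e0)
    - quadf lam%:M (line_b lam r) (quadmin lam%:M (line_b lam r)) = lam / 2 * (x - r) ^+ 2.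
Proof. by move=> lam_neq0; rewrite quadmin_e0 // !quadf_e0; field. Qed.

Lemma in_Fquad_e0 l D lam r : 0 < lam <= l -> `|r| <= D -> in_Fquad l D lam%:M (line_b lam r).
Proof.
case/andP=> lam_gt0 lam_le r_le; split; [split|split].
- exact: tr_scalar_mx.
- move=> v v_neq0; rewrite -mulmxA mul_scalar_mx -scalemxAr mxE.
  by rewrite mulr_gt0 ?dot_gt0.
- move=> v w; rewrite /quadgrad opprD addrACA subrr addr0 -mulmxBr mul_scalar_mx vnormZ.
  by rewrite ger0_norm ?(ltW lam_gt0) //; apply: ler_wpM2r; rewrite ?sqrtr_ge0.
- by rewrite quadmin_e0 ?lt0r_neq0 // vnorm_e0.
Qed.

Variables (p : nat) (alpha beta : 'I_p -> R).

Definition scli_line_solution lam r (x : nat -> R) : Prop :=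
  forall t, x (t + p)%N = \sum_(i < p) (alpha i * (lam * (x (t + i)%N - r)) + beta i * x (t + i)%N).

Lemma scli_iterate_e0 lam r (x : nat -> R) : (0 < p)%N -> scli_line_solution lam r x ->
  forall t, scli_iterate alpha beta (quadgrad lam%:M (line_b lam r)) (fun j => x j *: e0) t
    = x (t + p.-1)%N *: e0.
Proof.
move=> p_gt0 x_sol t; rewrite /scli_iterate.
have : (p.-1 < p)%N by rewrite prednK.
elim: t p.-1 => [|t IH] j jp //=; rewrite /scli_step; case: ifP => [jp1 | jpN].
  by rewrite IH // addSnnS.
have -> : j = p.-1 by move/negbT: jpN; lia.
rewrite addSnnS prednK // x_sol scaler_suml; apply: eq_bigr => i _.
by rewrite !IH // quadgrad_e0 !scalerA -scalerDl.
Qed.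

Lemma quad_line_instance l D lam r (x : nat -> R) T :
  (0 < p)%N -> 0 < lam <= l -> `|r| <= D -> (forall j, (j < p)%N -> `|x j| <= D) ->
  scli_line_solution lam r x ->
  exists (S : 'M[R]_n.+1) (b : vec) (init : nat -> vec),
    [/\ in_Fquad l D S b, (forall j, (j < p)%N -> vnorm (init j) <= D) &
      quadf S b (scli_iterate alpha beta (quadgrad S b) init T) - quadf S b (quadmin S b)
        = lam / 2 * (x (T + p.-1)%N - r) ^+ 2].
Proof.
move=> p_gt0 lam_bounds r_le x_le x_sol.
exists lam%:M, (line_b lam r), (fun j => x j *: e0); split.
- exact: in_Fquad_e0.
- by move=> j jp; rewrite vnorm_e0 x_le.
have lam_neq0 : lam != 0 by case/andP: lam_bounds => /lt0r_neq0.
by rewrite scli_iterate_e0 // quadf_gap_e0.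
Qed.

End LineQuadratics.

Lemma geometric_scaling (R : rcfType) (z : R[i]) (D : R) (p m : nat) :
  0 <= D -> 0 < sqnormc z -> (p.-1 <= m)%N ->
  exists u : R[i], (forall j, (j < p)%N -> `|Re (u * z ^+ j)| <= D) /\
    D ^+ 2 * Num.min 1 (sqnormc z ^+ m) <= Re (u * z ^+ m) ^+ 2.
Proof.
move=> D_ge0 N_gt0 pm; set N := sqnormc z; set M := Num.max 1 N ^+ p.-1.
have M_ge1 : 1 <= M by rewrite exprn_ege1 // le_max lexx.
have M_gt0 : 0 < M := lt_le_trans ltr01 M_ge1.
have NmM_gt0 : 0 < N ^+ m * M by rewrite mulr_gt0 // exprn_gt0.
set g := Num.sqrt (D ^+ 2 / (N ^+ m * M)).
have g2 : g ^+ 2 = D ^+ 2 / (N ^+ m * M) by rewrite sqr_sqrtr // divr_ge0 ?sqr_ge0 ?ltW.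
(* u = conj(z)^m * g makes u z^m = g N^m real, with the scale g chosen so that the
   first p values stay below D whether |z| < 1 or not. *)
exists (conjc z ^+ m * (g%:C)%C); split.
  move=> j jp; rewrite -(ger0_norm D_ge0) -ler_sqr ?nnegrE ?normr_ge0 //.
  rewrite !real_normK ?num_real //; apply: le_trans (Re_sqr_le_sqnormc _) _.
  rewrite !sqnormcM !sqnormcX sqnormc_conj sqnormc_real g2 -/N.
  have NjM : N ^+ j <= M.
    apply: le_trans (_ : Num.max 1 N ^+ j <= M).
      by rewrite lerXn2r ?nnegrE ?le_max ?lexx ?orbT ?ltW.
    by rewrite ler_weXn2l ?le_max ?lexx // -ltnS prednK // (leq_ltn_trans _ jp).
  have -> : N ^+ m * (D ^+ 2 / (N ^+ m * M)) * N ^+ j = D ^+ 2 * (N ^+ j / M).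
    by field; rewrite (lt0r_neq0 M_gt0) expf_neq0 // lt0r_neq0.
  by rewrite ler_piMr ?sqr_ge0 // ler_pdivrMr // mul1r.
have -> : conjc z ^+ m * g%:C%C * z ^+ m = (g * N ^+ m)%:C%C.
  by rewrite mulrAC -exprMn mulcJ_sqnormc -rmorphXn -rmorphM mulrC.
rewrite [Re _]/= exprMn g2.
have -> : D ^+ 2 / (N ^+ m * M) * N ^+ m ^+ 2 = D ^+ 2 * (N ^+ m / M).
  by field; rewrite (lt0r_neq0 M_gt0) expf_neq0 // lt0r_neq0.
rewrite ler_wpM2l ?sqr_ge0 // ler_pdivlMr //.
have [N_ge1 | N_lt1] := leP 1 N.
  rewrite /M (max_idPr N_ge1); apply: le_trans (ler_weXn2l N_ge1 pm).
  by rewrite ler_piMl ?exprn_ge0 ?(ltW N_gt0) // ge_min lexx.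
have -> : M = 1 by rewrite /M (max_idPl (ltW N_lt1)) expr1n.
by rewrite mulr1 ge_min lexx orbT.
Qed.

Lemma geometric_line_solution (R : realType) p (alpha beta : 'I_p -> R) lam (z u : R[i]) :
  z ^+ p = \sum_(i < p) ((beta i + lam * alpha i)%:C)%C * z ^+ i ->
  scli_line_solution alpha beta lam 0 (fun t => Re (u * z ^+ t)).
Proof.
move=> zp t; rewrite exprD mulrA zp mulr_sumr raddf_sum; apply: eq_bigr => i _.
rewrite subr0 /= (_ : _ * (_ * z ^+ i) = ((beta i + lam * alpha i)%:C)%C * (u * z ^+ (t + i))).
  by rewrite Re_realM; ring.
by rewrite exprD; ring.
Qed.

Lemma bernoulli_ineq (R : realDomainType) (x : R) k : -1 <= x -> 1 + k%:R * x <= (1 + x) ^+ k.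
Proof.
move=> x_ge; elim: k => [|k IH]; first by rewrite mul0r addr0 expr0.
have x1_ge0 : 0 <= 1 + x by lra.
rewrite exprS; apply: le_trans (ler_wpM2l x1_ge0 IH).
have : 0 <= k%:R * x ^+ 2 by rewrite mulr_ge0 ?sqr_ge0.
rewrite -natr1; nra.
Qed.

Lemma half_le_min_pow (R : realFieldType) (x N : R) m :
  0 <= x <= 1 -> 4 * m%:R * x <= 1 -> (1 - x) ^+ 2 < N -> 1 / 2 <= Num.min 1 (N ^+ m).
Proof.
move=> /andP[x_ge0 x_le1] mx N_gt; rewrite le_min; apply/andP; split; first lra.
apply: le_trans (_ : (1 - x) ^+ (2 * m) <= _).
  apply: le_trans (bernoulli_ineq (2 * m) (_ : -1 <= - x)); last lra.
  rewrite natrM; lra.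
rewrite exprM; apply: lerXn2r; rewrite ?nnegrE ?sqr_ge0 ?ltW //.
exact: le_lt_trans (sqr_ge0 _) N_gt.
Qed.

Lemma half_le_min_pow_schedule (R : realFieldType) (K mu N : R) (p T : nat) :
  0 < K -> 0 < mu -> 4 * p%:R * K * mu <= 1 -> (0 < p)%N -> (0 < T)%N ->
  (1 - K * (mu / T%:R)) ^+ 2 < N -> 1 / 2 <= Num.min 1 (N ^+ (T + p.-1)).
Proof.
move=> K_gt0 mu_gt0 Kmu p_gt0 T_gt0; set lam := mu / T%:R.
have TR_gt0 : (0 : R) < T%:R by rewrite ltr0n.
have muE : mu = lam * T%:R by rewrite divfK ?lt0r_neq0.
have Klam_ge0 : 0 <= K * lam by rewrite mulr_ge0 ?ltW ?divr_gt0.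
have mT : (T + p.-1)%:R <= p%:R * T%:R :> R.
  by rewrite -natrM ler_nat -{2}(prednK p_gt0) mulSn leq_add2l leq_pmulr.
have mKlam : 4 * (T + p.-1)%:R * (K * lam) <= 1.
  apply: le_trans (_ : 4 * (p%:R * T%:R) * (K * lam) <= 1).
    by rewrite ler_wpM2r // ler_wpM2l.
  by rewrite muE in Kmu; apply: le_trans Kmu; rewrite le_eqVlt; apply/orP; left; apply/eqP; ring.
have m_ge1 : 1 <= (T + p.-1)%:R :> R by rewrite ler1n addn_gt0 T_gt0.
have Klam_le1 : K * lam <= 1.
  by apply: le_trans mKlam; rewrite -[X in X <= _]mul1r ler_wpM2r //; lra.
by apply: half_le_min_pow; rewrite ?Klam_ge0.
Qed.

Lemma scli_line_fixed_point (R : realType) p (alpha beta : 'I_p -> R) (l D : R) :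
  0 < l -> 0 < D -> \sum_(i < p) beta i != 1 ->
  exists lam r y, [/\ 0 < lam <= l, `|r| <= D, `|y| <= D, y != r &
    scli_line_solution alpha beta lam r (fun=> y)].
Proof.
move=> l_gt0 D_gt0 B_neq1; set A := \sum_(i < p) alpha i; set B := \sum_(i < p) beta i.
set e := `|1 - B|; have e_gt0 : 0 < e by rewrite normr_gt0 subr_eq0 eq_sym.
set lam := Num.min l (e / (2 * (`|A| + 1))).
have lam_gt0 : 0 < lam by rewrite lt_min l_gt0 divr_gt0 ?mulr_gt0 ?ltr_wpDl.
have lamA : lam * `|A| <= e / 2.
  have : lam <= e / (2 * (`|A| + 1)) by rewrite ge_min lexx orbT.
  rewrite ler_pdivlMr ?mulr_gt0 ?ltr_wpDl // => h.
  have := normr_ge0 A; nra.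
set E := 1 - B - lam * A.
have E_ge : e / 2 <= `|E|.
  have : e <= `|E| + `|lam * A| by rewrite /e (_ : 1 - B = E + lam * A) ?ler_normD // /E subrK.
  by rewrite normrM (gtr0_norm lam_gt0); lra.
have E_neq0 : E != 0 by rewrite -normr_gt0; lra.
set y := - (lam * A * D) / E.
have yE : y * E = - (lam * A * D) by rewrite divfK.
exists lam, D, y; split.
- by rewrite lam_gt0 ge_min lexx.
- by rewrite gtr0_norm.
- rewrite /y normrM normfV normrN !normrM (gtr0_norm lam_gt0) (gtr0_norm D_gt0).
  rewrite ler_pdivrMr ?(lt_le_trans _ E_ge) ?divr_gt0 //.
  have := normr_ge0 A; nra.
- apply: contraNneq B_neq1 => y_eq_D; move: yE; rewrite y_eq_D /E => h.
  by apply/eqP; apply: (mulfI (lt0r_neq0 D_gt0)); rewrite mulr1 -/B; lra.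
move=> t; rewrite big_split /= -!mulr_suml -/A -/B.
move: yE; rewrite /E => yE; lra.
Qed.

Section RateLowerBound.
Variables (R : realType) (n p : nat) (l D : R) (alpha beta : 'I_p -> R).
Hypotheses (p_gt0 : (0 < p)%N) (l_gt0 : 0 < l) (D_gt0 : 0 < D).

Definition scli_rate_lower_bound : Prop :=
  exists (c : R) (T0 : nat), 0 < c /\ (0 < T0)%N /\
    forall T : nat, (T0 <= T)%N ->
      exists (S : 'M[R]_n.+1) (b : 'cV[R]_n.+1) (init : nat -> 'cV[R]_n.+1) (k : nat),
        [/\ in_Fquad l D S b,
            (forall j, (j < p)%N -> vnorm (init j) <= D),
            (k < p)%N &
            quadf S b (scli_iterate alpha beta (quadgrad S b) init (T + k))
              - quadf S b (quadmin S b) >= c * l * D ^+ 2 / T%:R].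

Lemma scli_rate_lower_bound_inconsistent : \sum_(i < p) beta i != 1 -> scli_rate_lower_bound.
Proof.
move=> sum_beta.
have [lam [r [y [lam_bds r_le y_le y_neq_r y_sol]]]] :=
  scli_line_fixed_point alpha l_gt0 D_gt0 sum_beta.
have lam_gt0 : 0 < lam by case/andP: lam_bds.
set V := lam / 2 * (y - r) ^+ 2.
have V_gt0 : 0 < V by rewrite mulr_gt0 ?divr_gt0 // exprn_even_gt0 //= subr_eq0.
exists (V / (l * D ^+ 2)), 1%N; split; first by rewrite divr_gt0 // mulr_gt0 // exprn_gt0.
split => // T T_ge1.
have [S [b [init [S_b init_le gapE]]]] :=
  quad_line_instance n T p_gt0 lam_bds r_le (fun j _ => y_le) y_sol.
exists S, b, init, 0%N; split => //; rewrite addn0 gapE -/V.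
have -> : V / (l * D ^+ 2) * l * D ^+ 2 = V by field; rewrite !lt0r_neq0 ?exprn_gt0.
by rewrite ler_pdivrMr ?ltr0n // ler_peMr ?(ltW V_gt0) // ler1n.
Qed.

Lemma scli_rate_lower_bound_consistent : \sum_(i < p) beta i = 1 -> scli_rate_lower_bound.
Proof.
move=> sum_beta.
have [K K_gt0 [l0 l0_gt0 near_roots]] := scli_charpoly_root_near_unit_circle alpha p_gt0 sum_beta.
have pK_gt0 : 0 < 4 * p%:R * K by rewrite mulr_gt0 // mulr_gt0 // ltr0n.
set mu := Num.min l (Num.min l0 (4 * p%:R * K)^-1).
have mu_gt0 : 0 < mu by rewrite !lt_min l_gt0 l0_gt0 invr_gt0.
have mu_le_l : mu <= l by rewrite ge_min lexx.
have mu_le_l0 : mu <= l0 by rewrite !ge_min lexx orbT.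
have Kmu : 4 * p%:R * K * mu <= 1.
  have : mu <= (4 * p%:R * K)^-1 by rewrite !ge_min lexx !orbT.
  have := mulfV (lt0r_neq0 pK_gt0); set y := _^-1; nra.
exists (mu / (4 * l)), 1%N; split; first by rewrite divr_gt0 // mulr_gt0.
split => // T T_ge1; set lam := mu / T%:R.
have lam_gt0 : 0 < lam by rewrite divr_gt0 ?ltr0n.
have lam_le_mu : lam <= mu by rewrite ler_pdivrMr ?ltr0n // ler_peMr ?(ltW mu_gt0) // ler1n.
have [z [rootz z_big]] := near_roots lam lam_gt0 (le_trans lam_le_mu mu_le_l0).
have N_gt0 : 0 < sqnormc z := le_lt_trans (sqr_ge0 _) z_big.
have [u [u_start u_end]] := geometric_scaling (ltW D_gt0) N_gt0 (leq_addl T p.-1).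
have lam_bds : 0 < lam <= l by rewrite lam_gt0 (le_trans lam_le_mu mu_le_l).
have r_le : `|0 : R| <= D by rewrite normr0 ltW.
have [S [b [init [S_b init_le gapE]]]] := quad_line_instance n T p_gt0 lam_bds
  r_le u_start (geometric_line_solution u (root_scli_charpoly rootz)).
exists S, b, init, 0%N; split => //; rewrite addn0 gapE subr0.
have half := half_le_min_pow_schedule K_gt0 mu_gt0 Kmu p_gt0 T_ge1 z_big.
have -> : mu / (4 * l) * l * D ^+ 2 / T%:R = lam / 2 * (D ^+ 2 / 2).
  by rewrite /lam; field; rewrite !lt0r_neq0 ?ltr0n.
apply: ler_wpM2l; first by rewrite divr_ge0 // ltW.
apply: (le_trans _ u_end).
by have := ler_wpM2l (sqr_ge0 D) half; rewrite div1r.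
Qed.

End RateLowerBound.

Theorem proposition30 (R : realType) (n p : nat) (hn : (0 < n)%N) (hp : (0 < p)%N)
    (l D : R) (hl : 0 < l) (hD : 0 < D) (alpha beta : 'I_p -> R) :
  exists (c : R) (T0 : nat), 0 < c /\ (0 < T0)%N /\
    forall T : nat, (T0 <= T)%N ->
      exists (S : 'M[R]_n) (b : 'cV[R]_n) (init : nat -> 'cV[R]_n) (k : nat),
        [/\ in_Fquad l D S b,
            (forall j, (j < p)%N -> vnorm (init j) <= D),
            (k < p)%N &
            quadf S b (scli_iterate alpha beta (quadgrad S b) init (T + k))
              - quadf S b (quadmin S b) >= c * l * D ^+ 2 / T%:R].
Proof.
case: n hn => // n _.
have [sum_beta | sum_beta] := eqVneq (\sum_(i < p) beta i) 1.
- exact: scli_rate_lower_bound_consistent.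
- exact: scli_rate_lower_bound_inconsistent.
Qed.
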